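(* Let $\mathcal{M}=\langle\mathcal{X},X_W,\Phi,\mathcal{B}\rangle$ be a system of constraints with $\mathcal{B}=\langle V,F,E\rangle$, let $\langle T_I,T_C,T_O\rangle$ be the coarse decomposition of the subgraph of $\mathcal{B}$ induced by $(V\setminus W)\cup F$ and $\mathrm{CO}(\mathcal{B})=\langle\mathcal{V},\mathcal{E}\rangle$ the causal ordering graph. Assume $\mathcal{M}$ is maximally uniquely solvable w.r.t. $\mathrm{CO}(\mathcal{B})$ and let $X^*$ be a solution of $\mathcal{M}$. Let $S_F\subseteq(T_C\cup T_O)\cap F$ and $S_V\subseteq(T_C\cup T_O)\cap(V\setminus W)$ be such that $S_F\cup S_V\in\mathcal{V}$, let $\xi_{S_V}\in\mathcal{X}_{S_V}$, and let $X'$ be a solution of the intervened system $\mathcal{M}_{\mathrm{do}(S_F,S_V,\xi_{S_V})}$. If there is no directed path in $\mathrm{CO}(\mathcal{B})$ from any $x\in S_V$ to $v\in(T_C\cup T_O)\cap V$, then $X^*_v=X'_v$ almost surely. (If there is $x\in S_V$ with a directed path from $x$ to $v$ in $\mathrm{CO}(\mathcal{B})$, then $X^*_v$ may have a different distribution than $X'_v$.)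
   Context: System of constraints $\langle\mathcal{X},X_W,\Phi,\mathcal{B}\rangle$: $\mathcal{X}=\bigotimes_{v\in V}\mathcal{X}_v$ standard measurable spaces; $W\subseteq V$ and $X_W=(X_w)_{w\in W}$ independent random variables; $\Phi=(\Phi_f)_{f\in F}$, $\Phi_f=\langle\phi_f,c_f,V(f)\rangle$, $V(f)\subseteq V$, $c_f$ a constant in a standard measurable space, $\phi_f:\mathcal{X}_{V(f)}\to\mathcal{Y}$ measurable; $\mathcal{B}=\langle V,F,E\rangle$ with $E=\{(f-v):v\in V(f)\}$; $V(S_F)=\bigcup_{f\in S_F}V(f)$. A solution is a measurable $g:\mathcal{X}_W\to\mathcal{X}_{V\setminus W}$ with $\phi_f(g_{V(f)\setminus W}(X_W),X_{V(f)\cap W})=c_f$ for all $f$ a.s. (the solution random vector has components $g(X_W)$). Solvable w.r.t. $S_F\subseteq F$, $S_V\subseteq V(S_F)\setminus W$: there is a measurable $g_{S_V}:\mathcal{X}_{V(S_F)\setminus S_V}\to\mathcal{X}_{S_V}$ such that a.s., for all $x_{V(S_F)\setminus W}$, $x_{S_V}=g_{S_V}(x_{V(S_F)\setminus(S_V\cup W)},X_{V(S_F)\cap W})$ implies $\phi_f(x_{V(f)\setminus W},X_{V(f)\cap W})=c_f$ for all $f\in S_F$; uniquely solvable if the converse holds as well. Perfect intervention: for a single pair $(f,v)$ with $v\in V\setminus W$ and $\xi_v\in\mathcal{X}_v$, $\mathcal{M}_{\mathrm{do}(f,v,\xi_v)}$ replaces $\Phi_f$ by $\langle x_v\mapsto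 x_v,\ \xi_v,\ \{v\}\rangle$ and replaces $\mathcal{B}$ by $\langle V,F,E'\rangle$ with $E'$ = edges of $E$ not incident to $f$, plus $(v-f)$. For tuples $S_F=(f_1,\dots,f_n)$, $S_V=(v_1,\dots,v_n)$ (enumerations of the sets), $\mathrm{do}(S_F,S_V,\xi_{S_V})$ performs these interventions for all pairs $(f_i,v_i)$. Graph notions: $\mathrm{adj}(X)$ = neighbours; $F'\subseteq F$ self-contained if $|F'|=|\mathrm{adj}(F')|$ and $|F''|\le|\mathrm{adj}(F'')|$ for $F''\subseteq F'$; minimal self-contained = non-empty self-contained with no non-empty strict self-contained subset. For a maximum matching $M$, an alternating path is a sequence of distinct vertices (possibly one) with consecutive ones adjacent and edges alternating between not in $M$ and in $M$; coarse decomposition: $T_I$ = vertices joined by an alternating path to an unmatched variable vertex, $T_O$ = to an unmatched constraint vertex, $T_C$ = the rest. $\mathrm{CO}(\mathcal{B})=\langle\mathcal{V},\mathcal{E}\rangle$ is a partition of $V\cup F$ into clusters with edges $x\to C$ ($\mathrm{cl}(x)$ the cluster of $x$): with $\mathcal{B}'$ the subgraph induced by $(V\setminus W)\cup F$ and $\mathcal{B}_I,\mathcal{B}_C,\mathcal{B}_O$ the subgraphs induced by $T_I,T_C,T_O$: on $\mathcal{B}_C$, while the current graph $\mathcal{B}''$ is non-null, choose a minimal self-contained $S'_F$ of $\mathcal{B}''$, form cluster $C=S'_F\cup\mathrm{adj}_{\mathcal{B}''}(S'_F)$, add edges $v\to C$ for $v\in\mathrm{adj}_{\mathcal{B}_C}(S'_F)\setminus\mathrm{adj}_{\mathcal{B}''}(S'_F)$,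 delete $C$. Other clusters: connected components of $\mathcal{B}_I$ and $\mathcal{B}_O$, and $\{w\}$, $w\in W$. Further edges: $v\to\mathrm{cl}(f)$ for each edge $(v-f)$ with $v\in(T_O\cup T_C)\cap V$, $f\in T_I\cap F$, or $v\in T_O\cap V$, $f\in T_C\cap F$; and $w\to\mathrm{cl}(f)$ for $w\in W$, $f\in\mathrm{adj}_{\mathcal{B}}(w)$. A directed path from $x$ to $y$ exists if $\mathrm{cl}(x)=\mathrm{cl}(y)$ or there are clusters $V_1=\mathrm{cl}(x),\dots,V_k=\mathrm{cl}(y)$ with, for each $i<k$, some $z_i\in V_i$ and $(z_i\to V_{i+1})\in\mathcal{E}$. Maximally uniquely solvable w.r.t. $\mathrm{CO}(\mathcal{B})$: uniquely solvable w.r.t. $S\cap F$, $S\cap V$ for every cluster $S$ with $S\cap W=\emptyset$, $S\cap T_I=\emptyset$, and solvable w.r.t. $T_I\cap F$ and $(T_I\cap V)\setminus W$. *)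

From HB Require Import structures.
From mathcomp Require Import all_boot all_order all_algebra.
From mathcomp Require Import all_classical all_reals all_analysis.
Set Implicit Arguments. Unset Strict Implicit. Unset Printing Implicit Defensive.
Import Order.TTheory GRing.Theory Num.Theory.

Section Graph.
Variables (V F : finType) (W : {set V}) (Vf : F -> {set V}).

Definition node := (V + F)%type.

Definition isvar (a : node) : bool := if a is inl _ then true else false.

Definition adjB (a b : node) : bool :=
  match a, b with
  | inl v, inr f => v \in Vf f
  | inr f, inl v => v \in Vf f
  | _, _ => false
  end.

Definition inBp (a : node) : bool :=
  match a with inl v => v \notin W | inr _ => true end.

Definition adjBp (a b : node) : bool := [&& inBp a, inBp b & adjB a b].

Definition is_matching (M : {set V * F}) : bool :=
  [forall e in M, (e.1 \notin W) && (e.1 \in Vf e.2)] &&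
  [forall e1 in M, forall e2 in M,
     ((e1.1 == e2.1) || (e1.2 == e2.2)) ==> (e1 == e2)].

Definition is_max_matching (M : {set V * F}) : Prop :=
  is_matching M /\ forall M' : {set V * F}, is_matching M' -> #|M'| <= #|M|.

Definition inM (M : {set V * F}) (a b : node) : bool :=
  match a, b with
  | inl v, inr f => (v, f) \in M
  | inr f, inl v => (v, f) \in M
  | _, _ => false
  end.

Fixpoint alt_rec (M : {set V * F}) (b : bool) (x : node) (s : seq node) : bool :=
  if s is y :: s' then [&& adjBp x y, inM M x y == b & alt_rec M (~~ b) y s']
  else true.

Definition alt_path (M : {set V * F}) (x : node) (s : seq node) : bool :=
  [&& inBp x, uniq (x :: s) & alt_rec M false x s].

Definition unmatched (M : {set V * F}) (a : node) : bool :=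
  match a with
  | inl v => (v \notin W) && [forall f, (v, f) \notin M]
  | inr f => [forall v, (v, f) \notin M]
  end.

Definition T_I (M : {set V * F}) : {set node} :=
  [set y | `[< exists x s, [&& unmatched M x, isvar x, alt_path M x s
                              & last x s == y] >]].
Definition T_O (M : {set V * F}) : {set node} :=
  [set y | `[< exists x s, [&& unmatched M x, ~~ isvar x, alt_path M x s
                              & last x s == y] >]].
Definition T_C (M : {set V * F}) : {set node} :=
  [set y | [&& inBp y, y \notin T_I M & y \notin T_O M]].

Definition adjR (R S : {set node}) : {set node} :=
  [set y in R | [exists x in S, adjB x y]].

Definition self_contained (R S : {set node}) : bool :=
  [&& S \subset [set x in R | ~~ isvar x],
      #|S| == #|adjR R S|
    & [forall S' : {set node}, (S' \subset S) ==> (#|S'| <= #|adjR R S'|)]].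

Definition min_self_contained (R S : {set node}) : bool :=
  [&& self_contained R S, S != finset.set0 &
      [forall S' : {set node}, ((S' != finset.set0) && (S' \proper S)) ==>
                                 ~~ self_contained R S']].

(* a run of the causal ordering algorithm on the current graph (induced by R):
   the successive choices of minimal self-contained sets, ending with the
   null graph *)
Fixpoint co_run (R : {set node}) (run : seq {set node}) : Prop :=
  match run with
  | [::] => R = finset.set0
  | Sc :: run' => min_self_contained R Sc /\
                 co_run (R :\: (Sc :|: adjR R Sc)) run'
  end.

Fixpoint co_clusters (R : {set node}) (run : seq {set node}) : seq {set node} :=
  if run is Sc :: run' then (Sc :|: adjR R Sc) :: co_clusters (R :\: (Sc :|: adjR R Sc)) run'
  else [::].

Fixpoint co_edges (BC R : {set node}) (run : seq {set node})
  : {set node * {set node}} :=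
  if run is Sc :: run' then
    [set (y, Sc :|: adjR R Sc) | y in adjR BC Sc :\: adjR R Sc]
      :|: co_edges BC (R :\: (Sc :|: adjR R Sc)) run'
  else finset.set0.

Definition comps (T : {set node}) : {set {set node}} :=
  [set [set y in T | connect (fun a b => [&& a \in T, b \in T & adjB a b]) x y]
    | x in T].

Definition is_CO (M : {set V * F}) (Cl : {set {set node}})
  (Ed : {set node * {set node}}) : Prop :=
  exists run : seq {set node},
    co_run (T_C M) run /\
    Cl = [set C | C \in co_clusters (T_C M) run] :|: comps (T_I M)
           :|: comps (T_O M) :|: [set [set inl w] | w in W] /\
    Ed = co_edges (T_C M) (T_C M) run
      :|: [set (inl e.1, finset.pblock Cl (inr e.2)) | e : V * F &
             (e.1 \in Vf e.2) &&
             ((((inl e.1 \in T_O M :|: T_C M) && (inr e.2 \in T_I M))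
               || ((inl e.1 \in T_O M) && (inr e.2 \in T_C M)))
              || (e.1 \in W))].

Definition dpath (Cl : {set {set node}}) (Ed : {set node * {set node}})
  (x y : node) : Prop :=
  exists s : seq {set node},
    path (fun C D : {set node} => [exists z in C, (z, D) \in Ed]) (finset.pblock Cl x) s /\
    last (finset.pblock Cl x) s = finset.pblock Cl y.

End Graph.

Section Prob.
Local Open Scope classical_set_scope.
Variables (V F : finType) (W : {set V}) (Vf : F -> {set V}).
Variables (dX : V -> measure_display) (X : forall v, measurableType (dX v)).
Variables (dY : F -> measure_display) (Y : forall f, measurableType (dY f)).
Variables (phi : forall f, (forall v, X v) -> Y f) (c : forall f, Y f).
Variables (dO : measure_display) (Omega : measurableType dO) (R : realType)
  (P : probability Omega R).

(* elements of X_A are represented by full assignments x : forall v, X v of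
   which only the coordinates in A matter; the product sigma-algebra on X_A
   (pulled back to full assignments) is generated by the coordinates in A *)
Definition coord_gen (A : {set V}) : set (set (forall v, X v)) :=
  [set E | exists a, a \in A /\ exists B : set (X a),
             measurable B /\ E = (fun x : forall v, X v => x a) @^-1` B].
Definition coord_sigma (A : {set V}) := <<s coord_gen A >>.

Definition meas_map (A B : {set V})
  (g : (forall v, X v) -> forall v, X v) : Prop :=
  forall b, b \in B ->
    (forall x y : forall v, X v, (forall a, a \in A -> x a = y a) -> g x b = g y b)
    /\ forall E : set (X b), measurable E ->
         coord_sigma A ((fun x => g x b) @^-1` E).

Definition wf_constraints : Prop :=
  forall f,
    (forall x y : forall v, X v, (forall a, a \in Vf f -> x a = y a) -> phi f x = phi f y)
    /\ forall E : set (Y f), measurable E -> coord_sigma (Vf f) (phi f @^-1` E).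

(* X_W = (X_w)_{w in W}, as a random assignment of which only W-coordinates
   matter: random variables, mutually independent *)
Definition exo_rv (XW : Omega -> forall v, X v) : Prop :=
  forall w, w \in W -> measurable_fun setT (fun o => XW o w).

Definition exo_indep (XW : Omega -> forall v, X v) : Prop :=
  forall B : forall w, set (X w), (forall w, w \in W -> measurable (B w)) ->
    (P [set o | forall w, w \in W -> B w (XW o w)] =
     \prod_(w in W) P [set o | B w (XW o w)])%E.

Definition merge (xw x : forall v, X v) : forall v, X v :=
  fun v => if v \in W then xw v else x v.

Definition sys_C (f : F) (x : forall v, X v) : Prop := phi f x = c f.

(* constraints of M_do(S_F, S_V, xi): the pairing of S_F with S_V is pv *)
Definition do_C (SF : {set F}) (pv : F -> V) (xi : forall v, X v)
  (f : F) (x : forall v, X v) : Prop :=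
  if f \in SF then x (pv f) = xi (pv f) else sys_C f x.

Definition is_solution (C : F -> (forall v, X v) -> Prop)
  (XW Xs : Omega -> forall v, X v) : Prop :=
  exists g : (forall v, X v) -> forall v, X v,
    meas_map W (~: W) g /\
    (forall o, Xs o = merge (XW o) (g (XW o))) /\
    {ae P, forall o, forall f, C f (merge (XW o) (g (XW o)))}.

Definition VS (SF : {set F}) : {set V} := \bigcup_(f in SF) Vf f.

Definition solvable (XW : Omega -> forall v, X v) (SF : {set F}) (SV : {set V})
  : Prop :=
  exists g : (forall v, X v) -> forall v, X v,
    meas_map (VS SF :\: SV) SV g /\
    {ae P, forall o, forall x : forall v, X v,
       (forall s, s \in SV -> merge (XW o) x s = g (merge (XW o) x) s) ->
       forall f, f \in SF -> sys_C f (merge (XW o) x)}.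

Definition uniquely_solvable (XW : Omega -> forall v, X v) (SF : {set F})
  (SV : {set V}) : Prop :=
  exists g : (forall v, X v) -> forall v, X v,
    meas_map (VS SF :\: SV) SV g /\
    {ae P, forall o, forall x : forall v, X v,
       (forall s, s \in SV -> merge (XW o) x s = g (merge (XW o) x) s) <->
       (forall f, f \in SF -> sys_C f (merge (XW o) x))}.

Local Close Scope classical_set_scope.
Definition max_uniq_solvable (XW : Omega -> forall v, X v) (M : {set V * F})
  (Cl : {set {set node V F}}) : Prop :=
  (forall S, S \in Cl -> [disjoint S & [set inl w | w in W]] ->
     [disjoint S & T_I W Vf M] ->
     uniquely_solvable XW [set f | inr f \in S] [set v | inl v \in S]) /\
  solvable XW [set f | inr f \in T_I W Vf M]
              [set v | (inl v \in T_I W Vf M) && (v \notin W)].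

End Prob.

From Pilot Require Import Defs.
From HB Require Import structures.
From mathcomp Require Import all_boot all_order all_algebra.
From mathcomp Require Import all_classical all_reals all_analysis.
Set Implicit Arguments. Unset Strict Implicit. Unset Printing Implicit Defensive.

(* Fix an outcome at which X* and X' solve their systems and every cluster of
   CO(B) outside T_I and W is uniquely solved, and call a variable good if X*
   and X' agree on it there. Exogenous variables are good. A cluster that is
   not reachable from S_V contains no intervened constraint, so both solutions
   satisfy all its constraints, and unique solvability makes its variables good
   as soon as its parents are. A T_O component has only exogenous parents,
   because T_O is closed under the neighbours of its constraints. A parent of a
   T_C cluster is exogenous, or lies in T_O or in a cluster produced earlier by
   the causal ordering algorithm, and is then joined to the cluster by an edge
   of CO(B), hence is unreachable from S_V too; induction along the run
   concludes. That the clusters do not overlap rests on T_I and T_O being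
   disjoint for a maximum matching, by the augmenting path argument. *)

Section AlternatingPaths.
Variables (V F : finType) (W : {set V}) (Vf : F -> {set V}).
Local Notation node := (node V F).
Local Notation adjBp := (adjBp W Vf).
Local Notation alt_rec := (alt_rec W Vf).
Local Notation alt_path := (alt_path W Vf).
Local Notation is_matching := (is_matching W Vf).
Local Notation unmatched := (unmatched W).
Implicit Types (M : {set V * F}) (x y z : node) (s : seq node).

Lemma adjB_sym : symmetric (adjB Vf).
Proof. by case=> ? [] ?. Qed.

Lemma adjBp_sym : symmetric adjBp.
Proof. by move=> x y; rewrite /Defs.adjBp adjB_sym andbCA. Qed.

Lemma inM_sym M : symmetric (inM M).
Proof. by case=> ? [] ?. Qed.

Lemma adjBp_isvar x y : adjBp x y -> isvar y = ~~ isvar x.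
Proof. by case/and3P; case: x y => ? [] ?. Qed.

Lemma alt_rec_rcons M b x s z :
  alt_rec M b x (rcons s z) =
  [&& alt_rec M b x s, adjBp (last x s) z & inM M (last x s) z == b (+) odd (size s)].
Proof.
elim: s b x => [|y s IH] b x /=; first by rewrite addbF andbT.
by rewrite IH; case: b; case: (odd (size s)); rewrite /= -!andbA.
Qed.

Lemma isvar_last_alt M b x s :
  alt_rec M b x s -> isvar (last x s) = isvar x (+) odd (size s).
Proof.
elim: s b x => [|y s IH] b x /=; first by rewrite addbF.
case/and3P=> /adjBp_isvar xy _ /IH ->.
by rewrite xy; case: (isvar x); case: (odd (size s)).
Qed.

Lemma inBp_last_alt M b x s : inBp W x -> alt_rec M b x s -> inBp W (last x s).
Proof.
elim: s b x => [|y s IH] b x //= _.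
by case/and3P=> /and3P[_ hy _] _ /(IH _ _ hy).
Qed.

(* The parity of an edge of an alternating path is determined by the sides
   of the graph its endpoints lie on. *)
Lemma alt_path_rcons M x s z :
  alt_path M x (rcons s z) = alt_path M x s &&
    [&& z \notin x :: s, adjBp (last x s) z
      & inM M (last x s) z == (isvar x != isvar (last x s))].
Proof.
rewrite /Defs.alt_path -rcons_cons rcons_uniq alt_rec_rcons addFb.
have [h|] := boolP (alt_rec M false x s); last by rewrite !andbF.
have -> : (isvar x != isvar (last x s)) = odd (size s).
  by rewrite (isvar_last_alt h); case: isvar; case: odd.
by case: (inBp W x); case: (z \in x :: s); case: (uniq (x :: s)).
Qed.

Definition alt_reach M x y := exists s, alt_path M x s /\ last x s = y.

Lemma alt_reach_prefix M x s y : alt_path M x s -> y \in x :: s -> alt_reach M x y.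
Proof.
elim/last_ind: s => [|s z IH] hp; first by rewrite inE => /eqP ->; exists [::].
rewrite -rcons_cons mem_rcons inE => /orP[/eqP ->|hy].
  by exists (rcons s z); rewrite last_rcons.
by apply: IH hy; move: hp; rewrite alt_path_rcons => /andP[].
Qed.

Lemma alt_reach_step M x y z :
  alt_reach M x y -> adjBp y z -> inM M y z = (isvar x != isvar y) -> alt_reach M x z.
Proof.
move=> [s [hp <-]] hyz hM; have [hz|hz] := boolP (z \in x :: s).
  exact: alt_reach_prefix hp hz.
by exists (rcons s z); rewrite last_rcons alt_path_rcons hp hz hyz hM eqxx.
Qed.

Lemma alt_reach_inBp M x y : alt_reach M x y -> inBp W y.
Proof. by move=> [s [/and3P[hx _ hr] <-]]; apply: inBp_last_alt hx hr. Qed.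

Lemma is_matchingP M : reflect
  ((forall e, e \in M -> e.1 \notin W /\ e.1 \in Vf e.2) /\
   {in M &, forall e1 e2, (e1.1 == e2.1) || (e1.2 == e2.2) -> e1 = e2})
  (is_matching M).
Proof.
apply: (iffP andP) => [[/forallP H1 /forallP H2]|[H1 H2]]; split.
- by move=> e he; move: (H1 e); rewrite he => /andP.
- move=> e1 e2 h1 h2 h; move: (H2 e1); rewrite h1 => /forallP /(_ e2).
  by rewrite h2 h => /eqP.
- by apply/forallP => e; apply/implyP => /H1 [-> ->].
- apply/forallP => e1; apply/implyP => h1; apply/forallP => e2; apply/implyP => h2.
  by apply/implyP => /(H2 _ _ h1 h2) ->.
Qed.

Lemma matching_subset M M' : M' \subset M -> is_matching M -> is_matching M'.
Proof.
move=> /fintype.subsetP sub /is_matchingP[H1 H2]; apply/is_matchingP; split.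
  by move=> e /sub /H1.
by move=> e1 e2 /sub h1 /sub h2; apply: H2.
Qed.

Lemma matching_setU1 M v f : is_matching M -> v \notin W -> v \in Vf f ->
  (forall f', (v, f') \notin M) -> (forall v', (v', f) \notin M) ->
  is_matching ((v, f) |: M).
Proof.
move=> /is_matchingP[H1 H2] hW hv hvM hfM; apply/is_matchingP; split.
  by move=> e /setU1P[-> //|/H1].
have hnew e : e \in M -> (v == e.1) || (f == e.2) -> False.
  case: e => v' f' he /orP[/eqP hv'|/eqP hf'].
    by move: (hvM f'); rewrite hv' he.
  by move: (hfM v'); rewrite hf' he.
move=> e1 e2 /setU1P[->|h1] /setU1P[->|h2] // h.
- by case: (hnew _ h2 h).
- by case: (hnew _ h1); rewrite eq_sym [f == _]eq_sym.
- exact: H2.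
Qed.

Lemma inM_partner M x y z : is_matching M -> inM M x y -> inM M x z -> y = z.
Proof.
move=> /is_matchingP[_ H]; case: x y z => [v|f] [v1|f1] [v2|f2] //= h1 h2.
  by move: (H _ _ h1 h2); rewrite eqxx => /(_ isT) [->].
by move: (H _ _ h1 h2); rewrite eqxx orbT => /(_ isT) [->].
Qed.

Lemma unmatched_inM M x y : unmatched M x -> inM M x y = false.
Proof.
case: x y => [v|f] [v'|f'] //=; first by case/andP=> _ /forallP /(_ f') /negbTE.
by move/forallP/(_ v')/negbTE.
Qed.

(* The matched partner of the end of an alternating path from an unmatched
   vertex of the same side is the previous vertex of the path. *)
Lemma alt_reach_same_side M x y z : is_matching M -> unmatched M x ->
  alt_reach M x y -> isvar y = isvar x -> adjBp y z -> alt_reach M x z.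
Proof.
move=> HM hx [s [hp <-]] hside hyz.
have [hM|/negbTE hM] := boolP (inM M (last x s) z); last first.
  by apply: alt_reach_step hyz _; [exists s | rewrite hM hside eqxx].
apply: (alt_reach_prefix hp); case/lastP: s hp hM hside hyz => [|s u] hp hM hside _.
  by rewrite /= unmatched_inM in hM.
rewrite last_rcons in hM hside.
move: hp; rewrite alt_path_rcons => /andP[_ /and3P[_ hsu /eqP hsuM]].
have hprev : inM M u (last x s).
  by rewrite inM_sym hsuM -hside (adjBp_isvar hsu); case: isvar.
by rewrite -(inM_partner HM hprev hM) -rcons_cons mem_rcons inE mem_last orbT.
Qed.

Lemma mem_T_I M y : reflect
  (exists2 x, unmatched M x && isvar x & alt_reach M x y) (y \in T_I W Vf M).
Proof.
rewrite inE; apply: (iffP (asboolP _)).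
  by move=> [x [s /and4P[hu hv hp /eqP hl]]]; exists x; [rewrite hu hv | exists s].
by move=> [x /andP[hu hv] [s [hp hl]]]; exists x, s; rewrite hu hv hp hl eqxx.
Qed.

Lemma mem_T_O M y : reflect
  (exists2 x, unmatched M x && ~~ isvar x & alt_reach M x y) (y \in T_O W Vf M).
Proof.
rewrite inE; apply: (iffP (asboolP _)).
  by move=> [x [s /and4P[hu hv hp /eqP hl]]]; exists x; [rewrite hu hv | exists s].
by move=> [x /andP[hu hv] [s [hp hl]]]; exists x, s; rewrite hu hv hp hl eqxx.
Qed.

Lemma T_I_inBp M y : y \in T_I W Vf M -> inBp W y.
Proof. by case/mem_T_I=> x _ /alt_reach_inBp. Qed.

Lemma T_O_inBp M y : y \in T_O W Vf M -> inBp W y.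
Proof. by case/mem_T_O=> x _ /alt_reach_inBp. Qed.

Lemma T_C_inBp M y : y \in T_C W Vf M -> inBp W y.
Proof. by rewrite inE => /and3P[]. Qed.

Lemma T_I_adj M y z : is_matching M ->
  y \in T_I W Vf M -> isvar y -> adjBp y z -> z \in T_I W Vf M.
Proof.
move=> HM /mem_T_I[x /andP[hu hv] hr] hy hyz; apply/mem_T_I.
exists x; rewrite ?hu ?hv //.
by apply: (alt_reach_same_side HM hu hr _ hyz); rewrite hy hv.
Qed.

Lemma T_O_adj M y z : is_matching M ->
  y \in T_O W Vf M -> ~~ isvar y -> adjBp y z -> z \in T_O W Vf M.
Proof.
move=> HM /mem_T_O[x /andP[hu hv] hr] hy hyz; apply/mem_T_O.
exists x; rewrite ?hu ?hv //.
by apply: (alt_reach_same_side HM hu hr _ hyz); rewrite (negbTE hv) (negbTE hy).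
Qed.

Lemma eq_alt_rec M M' b x s :
  {in x :: s &, forall u w, inM M u w = inM M' u w} ->
  alt_rec M b x s = alt_rec M' b x s.
Proof.
elim: s b x => //= y s IH b x H.
rewrite H ?mem_head ?inE ?eqxx ?orbT // (IH _ y) // => u w hu hw.
by apply: H; rewrite inE ?hu ?hw orbT.
Qed.

Lemma matching_swap M v f f' :
  is_matching M -> (v, f') \in M -> v \in Vf f -> unmatched M (inr f) -> f' != f ->
  let M' := (v, f) |: M :\ (v, f') in
  [/\ is_matching M', #|M'| = #|M|, unmatched M' (inr f')
    & forall x y, inl v \notin [:: x; y] -> inM M' x y = inM M x y].
Proof.
move=> HM hvf' hvf /forallP hf hf'f M'.
have /is_matchingP[/(_ _ hvf')[hvW _] Huniq] := HM.
have hvM f'' : (v, f'') \notin M :\ (v, f').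
  rewrite in_setD1; apply/andP=> -[/eqP hne hvf''].
  by apply: hne; apply: Huniq; rewrite ?eqxx.
split.
- apply: matching_setU1 => // [|v']; first exact: matching_subset (subD1set _ _) HM.
  by rewrite in_setD1 negb_and hf orbT.
- by rewrite cardsU1 hvM (cardsD1 (v, f') M) hvf'.
- apply/forallP => v'; rewrite in_setU1 negb_or xpair_eqE (negbTE hf'f) andbF /=.
  have [->|hv'] := eqVneq v' v; first exact: hvM.
  rewrite in_setD1 negb_and; apply/orP; right; apply/negP => hv'f'.
  move: (Huniq _ _ hv'f' hvf'); rewrite eqxx orbT => /(_ isT) [/eqP].
  by rewrite (negbTE hv').
- case=> [vx|fx] [vy|fy] //=; rewrite !inE ?xpair_eqE => hv.
    by have /negbTE -> : vx != v by apply: contraNneq hv => ->; rewrite eqxx.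
  by have /negbTE -> : vy != v by apply: contraNneq hv => ->; rewrite eqxx orbT.
Qed.

(* Rematch the first variable of the path to x and recurse from its former
   partner. *)
Lemma augmenting_path M x s : is_matching M -> unmatched M x -> ~~ isvar x ->
  alt_path M x s -> unmatched M (last x s) -> isvar (last x s) ->
  exists2 M', is_matching M' & #|M'| = #|M|.+1.
Proof.
have [n] := ubnP (size s); elim: n => // n IH in M x s *.
move=> hsize HM hx hxv hp hl hlv.
case: x hx hxv hp hl hlv => [//|f0] hx _.
case: s hsize => [|[v0|f] s] hsize hp //; last first.
  by case/and3P: hp => _ _ /and3P[/and3P[]].
have /and3P[_ _ /and3P[/and3P[_ hv0W hv0f0] _ _]] := hp.
case: s hsize hp => [|[v1|f1] s] hsize hp hl hlv.
- exists ((v0, f0) |: M); last by rewrite cardsU1 (forallP hx).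
  by apply: matching_setU1 => //; [case/andP: hl => _ /forallP | apply/forallP].
- by case/and3P: hp => _ _ /and3P[_ _ /and3P[/and3P[]]].
have /and3P[_ /and3P[hf0 hv0 huniq] /and3P[_ _ /and3P[_ hv0f1 hrec]]] := hp.
have {}hv0f1 : (v0, f1) \in M by move/eqP: hv0f1.
have hf1f0 : f1 != f0 by apply: contraNneq hf0 => ->; rewrite !inE eqxx orbT.
have [HM1 card1 hf1 inM1] := matching_swap HM hv0f1 hv0f0 hx hf1f0.
have := IH _ (inr f1) s _ HM1 hf1 isT; rewrite card1; apply => //.
- by move: hsize; rewrite /= ltnS => /ltnW.
- rewrite /Defs.alt_path /= huniq; apply: (etrans _ hrec).
  apply: eq_alt_rec => u w hu hw; apply: inM1; apply: contra hv0.
  by rewrite !inE => /orP[] /eqP ->.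
move: hl hlv => /=; have := mem_last (inr f1 : node) s.
case: (last _ s) => [vl|//] hlast /andP[hvlW /forallP hvl] _.
rewrite /= hvlW; apply/forallP => f; rewrite -[_ \in _]/(inM _ (inl vl) (inr f)).
by rewrite inM1 ?hvl // !inE negb_or andbT; apply: contraNneq hv0 => ->.
Qed.

(* Walking back along an alternating path from an unmatched variable stays in
   T_O, so that variable would end an augmenting path. *)
Lemma T_I_T_O_disjoint M :
  is_max_matching W Vf M -> [disjoint T_I W Vf M & T_O W Vf M].
Proof.
case=> HM Hmax; rewrite finset.disjoints_subset; apply/fintype.subsetP => y.
case/mem_T_I=> x /andP[hx hxv] [s [hp <-]]; rewrite inE; apply/negP => hO.
suff /mem_T_O[x' /andP[hx' hx'v] [s' [hp' hl']]] : x \in T_O W Vf M.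
  have := augmenting_path HM hx' hx'v hp'; rewrite hl' => /(_ hx hxv) [M' HM' cardM'].
  by move: (Hmax _ HM'); rewrite cardM' ltnn.
elim/last_ind: s hp hO => [//|s z IH] hp hO.
move: hp; rewrite alt_path_rcons => /andP[hp /and3P[_ hsz /eqP hszM]].
apply: IH hp _; rewrite last_rcons in hO.
case/mem_T_O: hO => x' hx' hr; apply/mem_T_O; exists x' => //.
apply: (alt_reach_step hr); first by rewrite adjBp_sym.
case/andP: hx' => _ /negbTE ->.
by rewrite inM_sym hszM hxv (adjBp_isvar hsz); case: isvar.
Qed.

End AlternatingPaths.

Lemma partitionU (T : finType) (P Q : {set {set T}}) (A B : {set T}) :
  finset.partition P A -> finset.partition Q B -> [disjoint A & B] ->
  finset.partition (P :|: Q) (A :|: B).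
Proof.
case/and3P=> /eqP covP triP nP /and3P[/eqP covQ triQ nQ] AB.
rewrite /finset.partition /finset.cover finset.bigcup_setU.
rewrite -/(finset.cover P) -/(finset.cover Q) covP covQ eqxx /=.
by rewrite trivIsetU ?covP ?covQ // finset.in_setU negb_or nP nQ.
Qed.

Lemma partition_imset1 (T T' : finType) (f : T -> T') (D : {set T}) :
  finset.partition [set [set f x] | x in D] (f @: D).
Proof.
apply/and3P; split.
- rewrite cover_imset; apply/eqP/setP => y; apply/bigcupP/imsetP.
    by case=> x hx; rewrite inE => /eqP ->; exists x.
  by case=> x hx ->; exists x; rewrite ?inE.
- apply/finset.trivIsetP => _ _ /imsetP[x _ ->] /imsetP[y _ ->] hxy.
  by rewrite disjoints1 inE; apply: contraNneq hxy => ->.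
- by apply/imsetP => -[x _ /setP /(_ (f x))]; rewrite !inE eqxx.
Qed.

Section CausalOrdering.
Variables (V F : finType) (W : {set V}) (Vf : F -> {set V}).
Local Notation node := (node V F).
Implicit Types (R S C : {set node}) (run : seq {set node}) (SV : {set V})
  (Cl : {set {set node}}) (Ed : {set node * {set node}}).

Lemma self_contained_sub R S : self_contained Vf R S -> S \subset R.
Proof.
case/and3P=> /fintype.subsetP H _ _; apply/fintype.subsetP => x /H.
by rewrite inE => /andP[].
Qed.

Lemma self_contained_constraint R S x : self_contained Vf R S -> x \in S -> ~~ isvar x.
Proof. by case/and3P=> /fintype.subsetP H _ _ /H; rewrite inE => /andP[]. Qed.

Lemma adjR_sub R S : adjR Vf R S \subset R.
Proof. by apply/fintype.subsetP => x; rewrite inE => /andP[]. Qed.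

Definition co_blocks R run := [set C | C \in co_clusters Vf R run].

Lemma co_blocks_cons R Sc run :
  co_blocks R (Sc :: run) =
  (Sc :|: adjR Vf R Sc) |: co_blocks (R :\: (Sc :|: adjR Vf R Sc)) run.
Proof. by apply/setP => D; rewrite !inE. Qed.

Lemma co_run_partition R run : co_run Vf R run -> finset.partition (co_blocks R run) R.
Proof.
elim: run R => [|Sc run IH] R /=.
  by move=> ->; rewrite partition_set0; apply/eqP/setP => C; rewrite !inE.
case=> /and3P[hsc hSc0 _] /IH hpart.
set C := Sc :|: adjR Vf R Sc.
have CR : C \subset R by rewrite finset.subUset adjR_sub (self_contained_sub hsc).
rewrite co_blocks_cons -/C.
rewrite -{2}(setID R C) (finset.setIidPr CR); apply: partitionU1 hpart _ _.
  by apply: contraNneq hSc0 => C0; rewrite -finset.subset0 -C0 finset.subsetUl.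
by rewrite finset.disjoints_subset finset.setCD finset.subsetUr.
Qed.

Lemma comps_partition T : finset.partition (comps Vf T) T.
Proof.
have sym : connect_sym (fun a b => [&& a \in T, b \in T & adjB Vf a b]).
  by apply: sym_connect_sym => a b; rewrite adjB_sym andbCA.
apply: equivalence_partitionP => x y z _ _ _; split; first exact: connect0.
by move=> /(same_connect sym) ->.
Qed.

Lemma comps_adj T C u w :
  C \in comps Vf T -> u \in C -> w \in T -> adjB Vf u w -> w \in C.
Proof.
case/imsetP=> x _ ->; rewrite !inE => /andP[uT xu] wT uw.
by rewrite wT (connect_trans xu) // connect1 // uT wT.
Qed.

Lemma inBp_disjoint_W C : (forall z, z \in C -> inBp W z) -> [disjoint C & inl @: W].
Proof.
move=> hC; rewrite finset.disjoints_subset; apply/fintype.subsetP => z /hC.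
by rewrite inE; apply: contraL => /imsetP[w hw ->] /=; rewrite hw.
Qed.

Definition unreachable Cl Ed (SV : {set V}) (y : node) : Prop :=
  forall x, x \in SV -> ~ dpath Cl Ed (inl x) y.

Lemma unreachable_pblock Cl Ed SV y y' :
  finset.pblock Cl y = finset.pblock Cl y' ->
  unreachable Cl Ed SV y -> unreachable Cl Ed SV y'.
Proof. by move=> E hy x hx; rewrite /dpath -E; apply: hy. Qed.

Lemma unreachable_edge Cl Ed SV y u : u \in finset.cover Cl ->
  (u, finset.pblock Cl y) \in Ed -> unreachable Cl Ed SV y -> unreachable Cl Ed SV u.
Proof.
move=> hu he hy x hx [s [hp hl]]; apply: (hy x hx).
exists (rcons s (finset.pblock Cl y)); rewrite rcons_path last_rcons hp; split => //.
by apply/existsP; exists u; rewrite he andbT hl mem_pblock.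
Qed.

Lemma unreachable_not_intervened Cl Ed (SF : {set F}) SV (pv : F -> V) C f y :
  finset.trivIset Cl -> [set inr f | f in SF] :|: [set inl s | s in SV] \in Cl ->
  pv @: SF = SV -> C \in Cl -> inr f \in C -> y \in C ->
  unreachable Cl Ed SV y -> f \notin SF.
Proof.
move=> triv hS0 hpv hC hf hy hun; apply/negP => hfS.
have hpvS : pv f \in SV by rewrite -hpv imset_f.
have CS0 : C = [set inr f | f in SF] :|: [set inl s | s in SV].
  by rewrite -(def_pblock triv hC hf) (def_pblock triv hS0) // finset.in_setU imset_f.
apply: (hun _ hpvS); exists [::]; split => //=.
rewrite (def_pblock triv hC hy) (def_pblock triv hC) //.
by rewrite CS0 finset.in_setU imset_f ?orbT.
Qed.

End CausalOrdering.

Section Propagation.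
Variables (V F : finType) (W : {set V}) (Vf : F -> {set V}) (M : {set V * F}).
Variables (Cl : {set {set node V F}}) (Ed : {set node V F * {set node V F}}).
Variable run : seq {set node V F}.
Local Notation node := (node V F).
Local Notation T_I := (T_I W Vf M).
Local Notation T_C := (T_C W Vf M).
Local Notation T_O := (T_O W Vf M).
Hypothesis HM : is_max_matching W Vf M.
Hypothesis Hrun : co_run Vf T_C run.
Hypothesis HCl : Cl = co_blocks Vf T_C run :|: comps Vf T_I :|: comps Vf T_O
                        :|: [set [set inl w] | w in W].
Hypothesis HEd : Ed = co_edges Vf T_C T_C run
  :|: [set (inl e.1, finset.pblock Cl (inr e.2)) | e : V * F &
         (e.1 \in Vf e.2) &&
         ((((inl e.1 \in T_O :|: T_C) && (inr e.2 \in T_I))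
           || ((inl e.1 \in T_O) && (inr e.2 \in T_C)))
          || (e.1 \in W))].

Lemma CO_partition :
  finset.partition Cl (T_C :|: T_I :|: T_O :|: inl @: W).
Proof.
have nIO := T_I_T_O_disjoint HM.
rewrite HCl; apply: partitionU; first apply: partitionU; first apply: partitionU.
- exact: co_run_partition Hrun.
- exact: comps_partition.
- rewrite finset.disjoints_subset; apply/fintype.subsetP => z.
  by rewrite !inE => /and3P[].
- exact: comps_partition.
- rewrite finset.disjoints_subset; apply/fintype.subsetP => z.
  move=> /finset.setUP[|hI]; rewrite finset.in_setC.
    by rewrite inE => /and3P[].
  by rewrite (disjointFr nIO hI).
- exact: partition_imset1.
- apply: inBp_disjoint_W => z; rewrite !finset.in_setU => /orP[/orP[]|].
  + by move=> /T_C_inBp.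
  + exact: T_I_inBp.
  + exact: T_O_inBp.
Qed.

Lemma CO_pblock C z : C \in Cl -> z \in C -> finset.pblock Cl z = C.
Proof. exact/def_pblock/partition_trivIset/CO_partition. Qed.

(* In the application, [agree u] says that the two solutions coincide at u for
   a fixed outcome, and [agree_cluster] is supplied by unique solvability. *)
Variables (SV : {set V}) (agree : V -> Prop).
Local Notation unreachable := (unreachable Cl Ed SV).
Hypothesis agree_W : forall w, w \in W -> agree w.
Hypothesis agree_cluster : forall C, C \in Cl ->
  [disjoint C & inl @: W] -> [disjoint C & T_I] ->
  (forall y, y \in C -> unreachable y) ->
  (forall f a, inr f \in C -> a \in Vf f -> inl a \notin C -> agree a) ->
  forall u, inl u \in C -> agree u.

Lemma unreachable_cluster C y y' : C \in Cl -> y \in C -> y' \in C ->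
  unreachable y -> unreachable y'.
Proof. by move=> hC hy hy'; apply: unreachable_pblock; rewrite !(CO_pblock hC). Qed.

Lemma mem_cover_Cl z : z \in T_C :|: T_O -> z \in finset.cover Cl.
Proof.
rewrite (cover_partition CO_partition) !finset.in_setU.
by case/orP=> ->; rewrite ?orbT.
Qed.

Lemma T_O_agree u : inl u \in T_O -> unreachable (inl u) -> agree u.
Proof.
move=> hu hun; have Opart := comps_partition Vf T_O.
have hu' : inl u \in finset.cover (comps Vf T_O) by rewrite (cover_partition Opart).
set C := finset.pblock (comps Vf T_O) (inl u).
have CO : C \in comps Vf T_O := pblock_mem hu'.
have uC : inl u \in C by rewrite mem_pblock.
have CCl : C \in Cl by rewrite HCl !finset.in_setU CO orbT.
have CsubO := fintype.subsetP (partitionS Opart CO).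
apply: (agree_cluster CCl) (uC).
- by apply: inBp_disjoint_W => z /CsubO /T_O_inBp.
- rewrite disjoint_sym; apply: disjointWr (T_I_T_O_disjoint HM).
  exact/fintype.subsetP.
- by move=> y hy; apply: (unreachable_cluster CCl uC).
move=> f a hf ha haC; have [aW|aW] := boolP (a \in W); first exact: agree_W.
have hfa : adjBp W Vf (inr f) (inl a) by rewrite /Defs.adjBp /= aW ha.
have aO := T_O_adj HM.1 (CsubO _ hf) isT hfa.
by case/negP: haC; apply: comps_adj CO hf aO ha.
Qed.

Section TCCluster.
Variables (R : {set node}) (Sc : {set node}).
Hypothesis hsc : self_contained Vf R Sc.
Hypothesis hR : R \subset T_C.
Let C := Sc :|: adjR Vf R Sc.
Hypothesis CCl : C \in Cl.
Hypothesis hEd : [set (y, C) | y in adjR Vf T_C Sc :\: adjR Vf R Sc] \subset Ed.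

Lemma T_C_cluster_sub : C \subset T_C.
Proof.
apply: fintype.subset_trans hR.
by rewrite finset.subUset adjR_sub (self_contained_sub hsc).
Qed.

(* A parent outside W is not in T_I, which is closed under the neighbours of
   its variables. *)
Lemma T_C_cluster_parent f a : inr f \in C -> a \in Vf f -> a \notin W ->
  inl a \notin C -> (inl a, C) \in Ed /\ inl a \in T_O :|: (T_C :\: R).
Proof.
move=> hf ha aW haC.
have hfSc : inr f \in Sc.
  move: hf; rewrite finset.in_setU => /orP[//|].
  rewrite inE => /andP[_ /existsP[[vx|fx] /andP[hx _]]] //.
  by have := self_contained_constraint hsc hx.
have hfT := fintype.subsetP T_C_cluster_sub _ hf.
have haf : adjBp W Vf (inl a) (inr f) by rewrite /Defs.adjBp /= aW ha.
have aI : inl a \notin T_I.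
  apply/negP => haI; move: hfT; rewrite inE (T_I_adj HM.1 haI isT haf).
  by rewrite andbF.
have aSc : [exists x in Sc, adjB Vf x (inl a)].
  by apply/existsP; exists (inr f); rewrite hfSc.
have [aO|aO] := boolP (inl a \in T_O).
  split; last by rewrite finset.in_setU aO.
  rewrite HEd finset.in_setU -(CO_pblock CCl hf); apply/orP; right.
  by apply/imsetP; exists (a, f) => //; rewrite inE /= ha aO hfT orbT.
have aT : inl a \in T_C by rewrite inE /= aW aI aO.
have aR : inl a \notin R.
  by apply: contra haC => aR; rewrite finset.in_setU inE aR aSc orbT.
split; last by rewrite finset.in_setU finset.in_setD aR aT orbT.
apply: (fintype.subsetP hEd); apply: imset_f.
rewrite finset.in_setD [inl a \in adjR _ T_C _]inE aT aSc andbT.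
by rewrite inE negb_and aR.
Qed.

Lemma T_C_cluster_agree :
  (forall u, inl u \in T_C :\: R -> unreachable (inl u) -> agree u) ->
  forall u, inl u \in C -> unreachable (inl u) -> agree u.
Proof.
move=> prev u hu hun; have CT := fintype.subsetP T_C_cluster_sub.
apply: (agree_cluster CCl) (hu).
- by apply: inBp_disjoint_W => z /CT /T_C_inBp.
- rewrite finset.disjoints_subset; apply/fintype.subsetP => z /CT.
  by rewrite !inE => /and3P[].
- by move=> y hy; apply: (unreachable_cluster CCl hu).
move=> f a hf ha haC; have [aW|aW] := boolP (a \in W); first exact: agree_W.
have [hE haOC] := T_C_cluster_parent hf ha aW haC.
have hua : unreachable (inl a).
  apply: (unreachable_edge _ _ (unreachable_cluster CCl hu hf hun)).
    apply: mem_cover_Cl; case/finset.setUP: haOC => [aO|].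
      by rewrite finset.in_setU aO orbT.
    by rewrite finset.in_setD finset.in_setU => /andP[_ ->].
  by rewrite (CO_pblock CCl hf).
by case/finset.setUP: haOC => [aO|/prev]; [exact: T_O_agree | apply].
Qed.

End TCCluster.

Lemma T_C_agree_run R run' : co_run Vf R run' -> R \subset T_C ->
  co_blocks Vf R run' \subset Cl -> co_edges Vf T_C R run' \subset Ed ->
  (forall u, inl u \in T_C :\: R -> unreachable (inl u) -> agree u) ->
  forall u, inl u \in T_C -> unreachable (inl u) -> agree u.
Proof.
elim: run' R => [|Sc run' IH] R /= hrun hR hCl hEd prev u hu.
  by apply: prev; rewrite finset.in_setD hrun finset.in_set0 hu.
case: hrun => /and3P[hsc _ _] hrun.
move: hCl hEd; rewrite co_blocks_cons !finset.subUset finset.sub1set.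
move=> /andP[CCl hCl] /andP[hEdC hEd].
have agreeC := T_C_cluster_agree hsc hR CCl hEdC prev.
apply: (IH _ hrun _ hCl hEd) hu => [|v].
  exact: fintype.subset_trans (finset.subsetDl _ _) hR.
rewrite !finset.in_setD negb_and negbK => /andP[/orP[hvC|hvR] hvT].
  exact: agreeC.
by apply: prev; rewrite finset.in_setD hvR hvT.
Qed.

Lemma CO_agree u : inl u \in T_C :|: T_O -> unreachable (inl u) -> agree u.
Proof.
case/finset.setUP=> [hu|]; last exact: T_O_agree.
apply: (T_C_agree_run Hrun) hu => //.
- by rewrite HCl -!finset.setUA finset.subsetUl.
- by rewrite HEd finset.subsetUl.
- by move=> v; rewrite finset.setDv finset.in_set0.
Qed.

End Propagation.

Section Solutions.
Variables (V F : finType) (W : {set V}) (Vf : F -> {set V}).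
Variables (dX : V -> measure_display) (X : forall v, measurableType (dX v)).
Variables (dY : F -> measure_display) (Y : forall f, measurableType (dY f)).
Variables (phi : forall f, (forall v, X v) -> Y f) (c : forall f, Y f).
Variables (dO : measure_display) (Omega : measurableType dO) (R : realType).
Variables (P : probability Omega R) (XW : Omega -> forall v, X v).
Local Notation merge := (Defs.merge W).
Local Notation sys_C := (sys_C phi c).

Definition determined (xw : forall v, X v) (SF : {set F}) (SV : {set V}) : Prop :=
  exists g, meas_map (VS Vf SF :\: SV) SV g /\
    forall x, (forall f, f \in SF -> sys_C f (merge xw x)) ->
      forall s, s \in SV -> merge xw x s = g (merge xw x) s.

Lemma determined_agree xw SF SV x1 x2 : determined xw SF SV ->
  (forall f, f \in SF -> sys_C f (merge xw x1)) ->
  (forall f, f \in SF -> sys_C f (merge xw x2)) ->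
  (forall a, a \in VS Vf SF :\: SV -> merge xw x1 a = merge xw x2 a) ->
  forall s, s \in SV -> merge xw x1 s = merge xw x2 s.
Proof.
move=> [g [hg hsol]] h1 h2 h12 s hs.
by rewrite (hsol _ h1 s hs) (hsol _ h2 s hs); apply: (hg s hs).1.
Qed.

Lemma uniquely_solvable_determined SF SV :
  uniquely_solvable W Vf phi c P XW SF SV -> {ae P, forall o, determined (XW o) SF SV}.
Proof.
case=> g [hg hae]; apply: filterS hae => o ho.
by exists g; split=> // x hx s hs; apply: (ho x).2.
Qed.

Lemma max_uniq_solvable_determined M Cl :
  max_uniq_solvable W Vf phi c P XW M Cl ->
  {ae P, forall o C, C \in Cl -> [disjoint C & inl @: W] ->
     [disjoint C & T_I W Vf M] ->
     determined (XW o) [set f | inr f \in C] [set v | inl v \in C]}.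
Proof.
case=> huniq _; apply: filter_forall => C.
have [/and3P[h1 h2 h3]|hC] :=
  boolP [&& C \in Cl, [disjoint C & inl @: W] & [disjoint C & T_I W Vf M]].
  by apply: filterS (uniquely_solvable_determined (huniq C h1 h2 h3)) => o ho _ _ _.
by apply: nearW => o h1 h2 h3; case/negP: hC; rewrite h1 h2 h3.
Qed.

End Solutions.

Unset Implicit Arguments.
Set Strict Implicit.

Theorem theorem23 (V F : finType) (W : {set V}) (Vf : F -> {set V})
  (dX : V -> measure_display) (X : forall v, measurableType (dX v))
  (dY : F -> measure_display) (Y : forall f, measurableType (dY f))
  (phi : forall f, (forall v, X v) -> Y f) (c : forall f, Y f)
  (dO : measure_display) (Omega : measurableType dO) (R : realType)
  (P : probability Omega R)
  (XW : Omega -> forall v, X v)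
  (M : {set V * F}) (Cl : {set {set node V F}})
  (Ed : {set node V F * {set node V F}})
  (Xs X' : Omega -> forall v, X v)
  (SF : {set F}) (SV : {set V}) (pv : F -> V) (xi : forall v, X v) (v : V) :
  wf_constraints Vf phi ->
  exo_rv W XW ->
  exo_indep W P XW ->
  is_max_matching W Vf M ->
  is_CO W Vf M Cl Ed ->
  max_uniq_solvable W Vf phi c P XW M Cl ->
  is_solution W P (sys_C phi c) XW Xs ->
  [set inr f | f in SF] \subset T_C W Vf M :|: T_O W Vf M ->
  [set inl s | s in SV] \subset T_C W Vf M :|: T_O W Vf M ->
  SV \subset ~: W ->
  [set inr f | f in SF] :|: [set inl s | s in SV] \in Cl ->
  {in SF &, injective pv} ->
  pv @: SF = SV ->
  is_solution W P (do_C phi c SF pv xi) XW X' ->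
  inl v \in T_C W Vf M :|: T_O W Vf M ->
  (forall x, x \in SV -> ~ dpath Cl Ed (inl x) (inl v)) ->
  {ae P, forall o, Xs o v = X' o v}.
Proof.
move=> _ _ _ HM [run [Hrun [HCl HEd]]] Huniq [g [_ [HXs Hg]]] _ _ _ HS0 _ Hpv
  [g' [_ [HX' Hg']]] Hv Hunreach.
have trivCl := partition_trivIset (CO_partition HM Hrun HCl).
apply: filterS (filterI Hg (filterI Hg' (max_uniq_solvable_determined Huniq))).
move=> o [sol [sol' det]]; rewrite HXs HX'.
pose agree u :=
  Defs.merge W (XW o) (g (XW o)) u = Defs.merge W (XW o) (g' (XW o)) u.
apply: (CO_agree HM Hrun HCl HEd (agree := agree)) Hv Hunreach.
  by move=> w hw; rewrite /agree /Defs.merge hw.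
move=> C hC hW hI hun hpar u hu.
have notSF f : inr f \in C -> f \notin SF.
  by move=> hf; apply: (unreachable_not_intervened trivCl HS0 Hpv hC hf hf (hun _ hf)).
apply: (determined_agree (det C hC hW hI)) => [f _|f|a|]; last by rewrite inE.
- exact: sol.
- by rewrite inE => hf; have := sol' f; rewrite /do_C (negbTE (notSF f hf)).
rewrite finset.in_setD inE => /andP[haC /bigcupP[f]].
by rewrite inE => hf ha; apply: hpar hf ha haC.
Qed.
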